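(* The three-qubit Fredkin gate $F_3=|0\rangle\langle0|\otimes I_2\otimes I_2+|1\rangle\langle1|\otimes \mathrm{SWAP}$, where $\mathrm{SWAP}|b,c\rangle=|c,b\rangle$ for $b,c\in\{0,1\}$, has $\mathrm{sr}(F_3)=4$.
   Context: $I_2$ is the $2\times 2$ identity; $\{|0\rangle,|1\rangle\}$ is the standard basis of $\mathbb{C}^2$. For a matrix $U$ on $\mathbb{C}^2\otimes\mathbb{C}^2\otimes\mathbb{C}^2$ (systems $A,B,C$), its Schmidt rank $\mathrm{sr}(U)$ is the least integer $r$ such that $U=\sum_{j=1}^r A_j\otimes B_j\otimes C_j$ with $A_j,B_j,C_j$ complex $2\times 2$ matrices (i.e. the tensor rank of $U$). *)

From HB Require Import structures.
From mathcomp Require Import all_boot all_algebra.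
From mathcomp Require Import reals.
From mathcomp Require Import complex mxtens.
Set Implicit Arguments. Unset Strict Implicit. Unset Printing Implicit Defensive.
Import GRing.Theory Num.Theory.
Local Open Scope ring_scope.

(* Tensor product A ⊗ B is mxtens's [A *t B] (Kronecker product, first factor
   most significant), so C^2 ⊗ C^2 ⊗ C^2 matrices have type 'M_(2 * (2 * 2)). *)

Definition op3 (R : realType) := 'M[R[i]]_(2 * (2 * 2)).

Definition sr_decomposable (R : realType) (U : op3 R) (r : nat) : Prop :=
  exists (A B C : 'I_r -> 'M[R[i]]_2),
    U = \sum_(j < r) (A j *t (B j *t C j)).

Definition schmidt_rank_is (R : realType) (U : op3 R) (r : nat) : Prop :=
  sr_decomposable U r /\ forall r', sr_decomposable U r' -> (r <= r')%N.

Definition ketbra (R : realType) (i j : 'I_2) : 'M[R[i]]_2 := delta_mx i j.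

(* SWAP = sum_{b,c} |c,b><b,c| = sum_{b,c} |c><b| ⊗ |b><c| *)
Definition SWAP (R : realType) : 'M[R[i]]_(2 * 2) :=
  \sum_(b < 2) \sum_(c < 2) (ketbra R c b *t ketbra R b c).

Definition Fredkin (R : realType) : op3 R :=
  ketbra R 0 0 *t ((1%:M : 'M[R[i]]_2) *t (1%:M : 'M[R[i]]_2))
  + ketbra R 1 1 *t SWAP R.

From mathcomp Require Import all_boot all_algebra.
From mathcomp Require Import reals.
From mathcomp Require Import complex mxtens.
From mathcomp Require Import ring.
Set Implicit Arguments. Unset Strict Implicit. Unset Printing Implicit Defensive.
Import GRing.Theory Num.Theory.
Local Open Scope ring_scope.

(* Upper bound: writing SWAP = 1/2 (I⊗I + X⊗X - J⊗J + Z⊗Z) with the real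
   Pauli matrices X, Z and J = [[0,1],[-1,0]] (so that Y⊗Y = -J⊗J), one gets
     F_3 = diag(1,1/2)⊗I⊗I + diag(0,1/2)⊗X⊗X
           + diag(0,-1/2)⊗J⊗J + diag(0,1/2)⊗Z⊗Z,
   a sum of four product operators; this is checked entrywise.

   Lower bound: flatten an operator U on ABC into the 16 x 4 matrix whose
   rows are indexed by the A- and C-entries and whose columns are indexed by
   the B-entries.  A sum of r product operators flattens into a product of a
   16 x r and an r x 4 matrix, so its flattening has rank at most r.  For
   F_3, the four rows with a = a' = 1 (the |1><1| ⊗ SWAP block) already form
   a permutation of the identity matrix, hence the flattening has rank 4. *)

Section FredkinRank.
Variable R : realType.
Local Notation C := (R[i]).

Lemma ord2 (x : 'I_2) : x = 0 \/ x = 1.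
Proof. by case: x => -[|[|//]] Hx; [left|right]; apply: val_inj. Qed.

Lemma big_ord2 (F : 'I_2 -> C) : \sum_(i < 2) F i = F 0 + F 1.
Proof. by rewrite big_ord_recl big_ord1; congr (F _ + F _); apply: val_inj. Qed.

Definition idx3 (a b c : 'I_2) : 'I_(2 * (2 * 2)) :=
  mxtens_index (a, mxtens_index (b, c)).

Lemma tens3E (A B D : 'M[C]_2) a b c a' b' c' :
  (A *t (B *t D)) (idx3 a b c) (idx3 a' b' c') = A a a' * (B b b' * D c c').
Proof. by rewrite /idx3 !tensmxE. Qed.

Lemma sum_tens3E r (A B D : 'I_r -> 'M[C]_2) a b c a' b' c' :
  (\sum_(j < r) A j *t (B j *t D j)) (idx3 a b c) (idx3 a' b' c') =
  \sum_(j < r) A j a a' * (B j b b' * D j c c').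
Proof. by rewrite summxE; apply: eq_bigr => j _; rewrite tens3E. Qed.

Lemma FredkinE a b c a' b' c' : Fredkin R (idx3 a b c) (idx3 a' b' c') =
  [&& a == 0, a' == 0, b == b' & c == c']%:R
  + [&& a == 1, a' == 1, b == c' & c == b']%:R.
Proof.
rewrite /Fredkin mxE !tens3E /SWAP /idx3 tensmxE summxE !big_ord2 !summxE.
rewrite !big_ord2 !tensmxE /ketbra !mxE.
by case: (ord2 a) => ->; case: (ord2 b) => ->; case: (ord2 c) => ->;
   case: (ord2 a') => ->; case: (ord2 b') => ->; case: (ord2 c') => ->;
   rewrite /= ?(mulr0, mul0r, mulr1, mul1r, addr0, add0r).
Qed.

Definition mx2 (p q s t : C) : 'M[C]_2 :=
  \matrix_(i < 2, j < 2)
    if i == 0 then (if j == 0 then p else q) else (if j == 0 then s else t).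

Definition pauli (j : 'I_4) : 'M[C]_2 :=
  nth 0 [:: mx2 1 0 0 1; mx2 0 1 1 0; mx2 0 1 (-1) 0; mx2 1 0 0 (-1)] j.

Definition fredkin_coef (j : 'I_4) : 'M[C]_2 :=
  nth 0 [:: mx2 1 0 0 2^-1; mx2 0 0 0 2^-1;
            mx2 0 0 0 (- 2^-1); mx2 0 0 0 2^-1] j.

Lemma Fredkin_decomposition :
  Fredkin R = \sum_(j < 4) fredkin_coef j *t (pauli j *t pauli j).
Proof.
apply/matrixP => i k.
case: (mxtens_indexP i) => a bc; case: (mxtens_indexP bc) => b c.
case: (mxtens_indexP k) => a' bc'; case: (mxtens_indexP bc') => b' c'.
rewrite -[mxtens_index (a, _)]/(idx3 a b c) -[mxtens_index (a', _)]/(idx3 a' b' c').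
rewrite FredkinE sum_tens3E !big_ord_recl big_ord0 /fredkin_coef /pauli /= !mxE.
have two_neq0 : (2 : C) != 0 by rewrite pnatr_eq0.
by case: (ord2 a) => ->; case: (ord2 b) => ->; case: (ord2 c) => ->;
   case: (ord2 a') => ->; case: (ord2 b') => ->; case: (ord2 c') => ->;
   rewrite /=; field.
Qed.

Definition flatB (U : op3 R) : 'M[C]_((2 * 2) * (2 * 2), 2 * 2) :=
  \matrix_(ac, bb)
    let: (aa, cc) := mxtens_unindex ac in
    let: (a, a') := mxtens_unindex aa in
    let: (c, c') := mxtens_unindex cc in
    let: (b, b') := mxtens_unindex bb in
    U (idx3 a b c) (idx3 a' b' c').

Lemma flatB_sum_tens r (A B D : 'I_r -> 'M[C]_2) :
  flatB (\sum_(j < r) A j *t (B j *t D j)) =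
  (\matrix_(ac, j)
     let: (aa, cc) := mxtens_unindex ac in
     A j (mxtens_unindex aa).1 (mxtens_unindex aa).2 *
     D j (mxtens_unindex cc).1 (mxtens_unindex cc).2)
  *m (\matrix_(j, bb) B j (mxtens_unindex bb).1 (mxtens_unindex bb).2).
Proof.
apply/matrixP => ac bb.
case: (mxtens_indexP ac) => aa cc.
case: (mxtens_indexP aa) => a a'; case: (mxtens_indexP cc) => c c'.
case: (mxtens_indexP bb) => b b'.
rewrite !mxE !mxtens_indexK sum_tens3E; apply: eq_bigr => j _.
by rewrite !mxE !mxtens_indexK /= mulrCA [RHS]mulrC.
Qed.

Lemma rank_flatB_le (U : op3 R) r : sr_decomposable U r -> (\rank (flatB U) <= r)%N.
Proof.
move=> [A [B [D ->]]]; rewrite flatB_sum_tens.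
exact: leq_trans (mxrankM_maxr _ _) (rank_leq_row _).
Qed.

(* The row (a a', c c') = (1 1, c' c) of flatB F_3 is the unit vector e_(c c'),
   because <1 b c| F_3 |1 b' c'> = [b = c'][c = b']. *)
Definition swap_rows (k : 'I_(2 * 2)) : 'I_((2 * 2) * (2 * 2)) :=
  mxtens_index (mxtens_index (1, 1),
                mxtens_index ((mxtens_unindex k).2, (mxtens_unindex k).1)).

Lemma flatB_Fredkin_swap_rows : rowsub swap_rows (flatB (Fredkin R)) = 1%:M.
Proof.
apply/matrixP => k l.
case: (mxtens_indexP k) => c' c; case: (mxtens_indexP l) => b b'.
rewrite !mxE /swap_rows !mxtens_indexK /=.
rewrite FredkinE (inj_eq (can_inj (@mxtens_indexK _ _))) xpair_eqE /=.
by rewrite add0r [b == c']eq_sym.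
Qed.

Lemma rank_flatB_Fredkin : \rank (flatB (Fredkin R)) = 4%N.
Proof.
apply/eqP; rewrite eqn_leq rank_leq_col /=.
have <- : \rank (1%:M : 'M[C]_(2 * 2)) = 4%N by rewrite mxrank1.
by rewrite -flatB_Fredkin_swap_rows mxrankS // rowsub_sub.
Qed.

End FredkinRank.

Theorem mainTheorem11 (R : realType) : schmidt_rank_is (Fredkin R) 4.
Proof.
split.
- by exists (@fredkin_coef R), (@pauli R), (@pauli R);
     exact: Fredkin_decomposition.
- by move=> r decU; rewrite -(rank_flatB_Fredkin R); exact: rank_flatB_le.
Qed.
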